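(* Let $A \in \mathbb{R}^{m \times n_A}$ and $B \in \mathbb{R}^{m \times n_B}$, where the columns of $B$ are nonzero. Let $k \le n_B$ and let $OPT_k$ be a set of $k$ columns of $B$ maximizing $f_A(S)$ over all sets $S$ of $k$ columns of $B$, and assume $\sigma_{\min}(OPT_k) > 0$. Let $\varepsilon > 0$, and let $T_r$ be the set of columns output by $\textsc{Greedy}(A, B, r)$ for $r = \left\lceil \frac{16k}{\varepsilon\, \sigma_{\min}(OPT_k)} \right\rceil$. Then $$f_A(T_r) \ge (1-\varepsilon)\, f_A(OPT_k).$$
   Context: For a finite set $V$ of vectors in $\mathbb{R}^m$, $\Pi_V$ denotes the orthogonal projector onto $\mathrm{span}(V)$. For a matrix $M$ with $m$ rows, $f_M(V) = \|\Pi_V M\|_F^2$ (the squared Frobenius norm of the projection of $M$ onto $\mathrm{span}(V)$). For a finite set $V$ of nonzero vectors, $\sigma_{\min}(V)$ is the smallest squared singular value of the matrix whose columns are the vectors of $V$ rescaled to unit length, i.e. $\inf_{\|x\|_2=1}\|Mx\|_2^2$ for that matrix $M$. The algorithm $\textsc{Greedy}(A, B, r)$: start with $S = \emptyset$; for $i = 1, \dots, r$, pick a column $B_j$ of $B$ maximizing $f_A(S \cup \{B_j\})$ and set $S \leftarrow S \cup \{B_j\}$; return $S$. *)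

From HB Require Import structures.
From mathcomp Require Import all_boot all_order all_algebra.
From mathcomp Require Import boolp classical_sets reals.
From Stdlib Require Import ClassicalEpsilon.
Set Implicit Arguments. Unset Strict Implicit. Unset Printing Implicit Defensive.
Import Order.TTheory GRing.Theory Num.Theory.
Local Open Scope ring_scope.
Local Open Scope classical_set_scope.

Section Defs.
Variables (R : realType) (m nB : nat).

Definition sqnorm (p : nat) (x : 'cV[R]_p) : R := \sum_i (x i 0) ^+ 2.

Definition frob2 (p q : nat) (M : 'M[R]_(p, q)) : R := \sum_i \sum_j (M i j) ^+ 2.

Definition in_span (B : 'M[R]_(m, nB)) (S : {set 'I_nB}) (x : 'cV[R]_m) : Prop :=
  exists c : 'I_nB -> R, x = \sum_(j in S) c j *: col j B.

Definition is_orth_proj (B : 'M[R]_(m, nB)) (S : {set 'I_nB}) (P : 'M[R]_m) : Prop :=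
  forall x : 'cV[R]_m, in_span B S (P *m x) /\
    forall y, in_span B S y -> y^T *m (x - P *m x) = 0.

(* the orthogonal projector Pi_V (exists and is unique) *)
Definition proj (B : 'M[R]_(m, nB)) (S : {set 'I_nB}) : 'M[R]_m :=
  epsilon (inhabits 0) (is_orth_proj B S).

Definition fA (nA : nat) (A : 'M[R]_(m, nA)) (B : 'M[R]_(m, nB)) (S : {set 'I_nB}) : R :=
  frob2 (proj B S *m A).

Definition normalized_cols (B : 'M[R]_(m, nB)) (S : {set 'I_nB}) : 'M[R]_(m, #|S|) :=
  \matrix_(i < m, t < #|S|)
     (B i (enum_val t) / Num.sqrt (sqnorm (col (enum_val t) B))).

Definition sigma_min (B : 'M[R]_(m, nB)) (S : {set 'I_nB}) : R :=
  inf [set sqnorm (normalized_cols B S *m x) | x in [set x : 'cV[R]_#|S| | sqnorm x = 1]].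

(* g : 'I_r -> 'I_nB is a run of Greedy(A, B, r): at step i (with current set
   S_i = { B_{g t} | t < i }) the chosen column B_{g i} maximizes f_A(S_i u {B_j}). *)
Definition greedy_set (r : nat) (g : 'I_r -> 'I_nB) (i : nat) : {set 'I_nB} :=
  [set g t | t : 'I_r & (t < i)%N].

Definition is_greedy_run (nA : nat) (A : 'M[R]_(m, nA)) (B : 'M[R]_(m, nB))
    (r : nat) (g : 'I_r -> 'I_nB) : Prop :=
  forall (i : 'I_r) (j : 'I_nB),
    fA A B (greedy_set g i :|: [set j]) <= fA A B (greedy_set g i :|: [set g i]).

Definition greedy_output (r : nat) (g : 'I_r -> 'I_nB) : {set 'I_nB} :=
  [set g t | t : 'I_r].

End Defs.

From HB Require Import structures.
From mathcomp Require Import all_boot all_order all_algebra.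
From mathcomp Require Import boolp classical_sets reals.
From mathcomp Require Import ring lra.
From Stdlib Require Import ClassicalEpsilon.
Import Order.TTheory GRing.Theory Num.Theory.
Local Open Scope ring_scope.
Set Implicit Arguments. Unset Strict Implicit. Unset Printing Implicit Defensive.

(* Fix O = OPT_k and s = sigma_min(O); let T_t be the greedy set after t steps and
   r_j = A_j - Pi_{T_t} A_j the residuals.  Two Cauchy-Schwarz estimates give
   (f(O) - f(T_t))^2 <= 4 f(O) sum_j |Pi_O r_j|^2 whenever f(T_t) <= f(O).  Expanding Pi_O r_j
   in the normalized columns of O, the definition of sigma_min gives
   s |Pi_O r_j|^2 <= sum_{v in O} <B_v, r_j>^2 / |B_v|^2, and for each v the sum over j of
   these terms is at most the gain f(T_t + B_v) - f(T_t), hence at most the greedy gain.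
   So the gap e_t = f(O) - f(T_t) obeys s e_t^2 <= 4 k f(O) (e_t - e_(t+1)), which forces
   t s e_t <= 4 k f(O); at t = r this gives e_r <= eps f(O) / 4. *)

Section CauchySchwarz.
Variable R : realDomainType.

Lemma sumr_mul_sqr_le (I : finType) (x y : I -> R) :
  (\sum_i x i * y i) ^+ 2 <= (\sum_i x i ^+ 2) * (\sum_i y i ^+ 2).
Proof.
have prod_sum (a b : I -> R) :
    (\sum_i a i) * (\sum_j b j) = \sum_i \sum_j a i * b j.
  by rewrite mulr_suml; apply: eq_bigr => i _; rewrite mulr_sumr.
have lagrange : \sum_i \sum_j (x i * y j - x j * y i) ^+ 2 =
    2 * ((\sum_i x i ^+ 2) * (\sum_i y i ^+ 2) - (\sum_i x i * y i) ^+ 2).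
  have expand i j : (x i * y j - x j * y i) ^+ 2 =
      x i ^+ 2 * y j ^+ 2 + y i ^+ 2 * x j ^+ 2 - 2 * (x i * y i * (x j * y j)).
    by ring.
  under eq_bigr do under eq_bigr do rewrite expand.
  under eq_bigr do rewrite sumrB big_split /=.
  rewrite sumrB big_split /= -!prod_sum.
  have -> : \sum_i \sum_j 2 * (x i * y i * (x j * y j)) = 2 * (\sum_i x i * y i) ^+ 2.
    rewrite expr2 prod_sum mulr_sumr; apply: eq_bigr => i _.
    by rewrite mulr_sumr.
  ring.
have : 0 <= \sum_i \sum_j (x i * y j - x j * y i) ^+ 2.
  by apply: sumr_ge0 => i _; apply: sumr_ge0 => j _; apply: sqr_ge0.
by rewrite lagrange pmulr_rge0 // subr_ge0.
Qed.

Lemma sumr_mul_sqr_le_cond (I : finType) (P : pred I) (x y : I -> R) :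
  (\sum_(i | P i) x i * y i) ^+ 2 <=
  (\sum_(i | P i) x i ^+ 2) * (\sum_(i | P i) y i ^+ 2).
Proof.
rewrite !(big_mkcond P).
have := sumr_mul_sqr_le (fun i => if P i then x i else 0) (fun i => if P i then y i else 0).
by congr (_ ^+ 2 <= _ * _); apply: eq_bigr => i _; case: (P i); rewrite ?mul0r ?expr0n.
Qed.

End CauchySchwarz.

Section Dot.
Variables (R : realType) (p : nat).
Implicit Types (u v w : 'cV[R]_p).

Definition dot u v : R := \sum_i u i 0 * v i 0.

Lemma sqnormE u : sqnorm u = dot u u.
Proof. by apply: eq_bigr => i _; rewrite expr2. Qed.

Lemma sqnorm_ge0 u : 0 <= sqnorm u.
Proof. by apply: sumr_ge0 => i _; apply: sqr_ge0. Qed.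

Lemma sqnorm_eq0 u : (sqnorm u == 0) = (u == 0).
Proof.
apply/eqP/eqP => [|->]; last by rewrite /sqnorm big1 // => i _; rewrite mxE expr0n.
move/eqP; rewrite psumr_eq0 => [/allP u0|i _]; last exact: sqr_ge0.
apply/matrixP => i j; rewrite (ord1 j) mxE.
by apply/eqP; rewrite -sqrf_eq0; apply: u0; apply: mem_index_enum.
Qed.

Lemma sqnorm_gt0 u : u != 0 -> 0 < sqnorm u.
Proof. by rewrite lt_def sqnorm_eq0 sqnorm_ge0 andbT. Qed.

Lemma dotC u v : dot u v = dot v u.
Proof. by apply: eq_bigr => i _; rewrite mulrC. Qed.

Lemma dotDl u v w : dot (u + v) w = dot u w + dot v w.
Proof. by rewrite /dot -big_split; apply: eq_bigr => i _; rewrite mxE mulrDl. Qed.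

Lemma dotBr u v w : dot u (v - w) = dot u v - dot u w.
Proof. by rewrite /dot -sumrB; apply: eq_bigr => i _; rewrite !mxE mulrBr. Qed.

Lemma dotZl a u v : dot (a *: u) v = a * dot u v.
Proof. by rewrite /dot mulr_sumr; apply: eq_bigr => i _; rewrite mxE mulrA. Qed.

Lemma dot_suml (I : finType) (P : pred I) (F : I -> 'cV[R]_p) v :
  dot (\sum_(i | P i) F i) v = \sum_(i | P i) dot (F i) v.
Proof.
by rewrite /dot exchange_big; apply: eq_bigr => i _; rewrite summxE mulr_suml.
Qed.

Lemma trmx_mul_dot u v : u^T *m v = (dot u v)%:M.
Proof.
apply/matrixP => i j; rewrite (ord1 i) (ord1 j) !mxE /= mulr1n.
by apply: eq_bigr => k _; rewrite mxE.
Qed.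

Lemma dot_sqr_le u v : dot u v ^+ 2 <= sqnorm u * sqnorm v.
Proof. exact: sumr_mul_sqr_le. Qed.

Lemma sqnormD u v : sqnorm (u + v) = sqnorm u + 2 * dot u v + sqnorm v.
Proof. by rewrite !sqnormE !dotDl ![dot _ (_ + _)]dotC !dotDl (dotC v u); ring. Qed.

Lemma sqnormZ a u : sqnorm (a *: u) = a ^+ 2 * sqnorm u.
Proof. by rewrite !sqnormE dotZl dotC dotZl mulrA expr2. Qed.

Lemma sum_dot_sqr_le (q : nat) (u w : 'I_q -> 'cV[R]_p) :
  (\sum_k dot (u k) (w k)) ^+ 2 <= (\sum_k sqnorm (u k)) * (\sum_k sqnorm (w k)).
Proof.
rewrite /dot /sqnorm !pair_bigA.
exact: (sumr_mul_sqr_le (fun z : 'I_q * 'I_p => u z.1 z.2 0) (fun z => w z.1 z.2 0)).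
Qed.

End Dot.

Section Projection.
Variables (R : realType) (m nB : nat) (B : 'M[R]_(m, nB)).
Local Notation P S := (proj B S).
Local Notation span := (in_span B).
Implicit Types (S T : {set 'I_nB}) (x y u : 'cV[R]_m).

Definition span_mx S : 'M[R]_(nB, m) := \matrix_(j, i) (if j \in S then B i j else 0).

Lemma in_spanE S x : span S x <-> (x^T <= span_mx S)%MS.
Proof.
have coefE (c : 'rV[R]_nB) : (c *m span_mx S)^T = \sum_(j in S) c 0 j *: col j B.
  apply/matrixP => i k; rewrite (ord1 k) !mxE summxE [RHS]big_mkcond.
  by apply: eq_bigr => j _; rewrite !mxE; case: (j \in S); rewrite ?mulr0.
split=> [[c ->] | /submxP [c xE]].
- apply/submxP; exists (\row_j c j); apply: trmx_inj.
  by rewrite trmxK coefE; apply: eq_bigr => j _; rewrite mxE.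
- by exists (c 0); rewrite -coefE -xE trmxK.
Qed.

Lemma row_mul_tr_eq0 (p : nat) (v : 'rV[R]_p) : v *m v^T = 0 -> v = 0.
Proof.
rewrite -[v in v *m _]trmxK trmx_mul_dot -sqnormE => /matrixP/(_ 0 0).
rewrite !mxE /= mulr1n => /eqP; rewrite sqnorm_eq0 => /eqP/(congr1 trmx).
by rewrite trmxK trmx0.
Qed.

Lemma exists_orth_proj S : exists P, is_orth_proj B S P.
Proof.
have [W eqW W_free] : exists2 W : 'M_(\rank (span_mx S), m),
    (W :=: span_mx S)%MS & row_free W.
  by exists (row_base (span_mx S)); [exact: eq_row_base | exact: row_base_free].
pose G := W *m W^T.
have G_unit : G \in unitmx.
  rewrite -row_free_unit; apply: inj_row_free => v Gv0.
  have vW0 : (v *m W) *m (v *m W)^T = 0.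
    by rewrite trmx_mul mulmxA -(mulmxA v) Gv0 mul0mx.
  by apply/eqP; rewrite -(mulmx_free_eq0 _ W_free) (row_mul_tr_eq0 vW0).
exists (W^T *m invmx G *m W) => x; split.
- by apply/in_spanE; rewrite -!mulmxA trmx_mul trmxK -eqW submxMl.
- move=> y /in_spanE; rewrite -eqW => /submxP [e ->].
  by rewrite mulmxBr !mulmxA -(mulmxA e W W^T) mulmxK // subrr.
Qed.

Lemma projP S : is_orth_proj B S (P S).
Proof. exact: epsilon_spec (exists_orth_proj S). Qed.

Lemma proj_in_span S x : span S (P S *m x).
Proof. by case: (projP S x). Qed.

Lemma dot_proj_res S x y : span S y -> dot y (x - P S *m x) = 0.
Proof.
case: (projP S x) => _ orth /orth; rewrite trmx_mul_dot => /matrixP/(_ 0 0).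
by rewrite !mxE /= mulr1n.
Qed.

Lemma dot_proj S x y : span S y -> dot y (P S *m x) = dot y x.
Proof. by move/(dot_proj_res x)/eqP; rewrite dotBr subr_eq0 => /eqP. Qed.

Lemma span_sub S x y : span S x -> span S y -> span S (x - y).
Proof.
rewrite !in_spanE linearB /= => Sx Sy.
by rewrite addmx_sub // -scaleN1r scalemx_sub.
Qed.

Lemma span_col S j : j \in S -> span S (col j B).
Proof.
move=> jS; exists (fun i => (i == j)%:R).
rewrite (bigD1 j) //= eqxx scale1r big1 ?addr0 // => i /andP [_ /negbTE ->].
by rewrite scale0r.
Qed.

Lemma span_subset S T x : S \subset T -> span S x -> span T x.
Proof.
move=> /fintype.subsetP ST [c ->]; exists (fun j => if j \in S then c j else 0).
rewrite big_mkcond [RHS]big_mkcond /=; apply: eq_bigr => j _.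
by case: (boolP (j \in S)) => [/ST -> | _]; case: (j \in T); rewrite ?scale0r.
Qed.

Lemma proj_id S y : span S y -> P S *m y = y.
Proof.
move=> Sy; have Sres : span S (y - P S *m y).
  exact: span_sub (proj_in_span S y).
have := dot_proj_res y Sres; rewrite -sqnormE => /eqP.
by rewrite sqnorm_eq0 subr_eq0 => /eqP.
Qed.

Lemma sqnorm_proj_le S x : sqnorm (P S *m x) <= sqnorm x.
Proof.
have := sqnormD (P S *m x) (x - P S *m x).
rewrite subrKC (dot_proj_res _ (proj_in_span S x)) mulr0 addr0 => ->.
by rewrite lerDl sqnorm_ge0.
Qed.

Lemma sqnorm_proj_subset S T x : S \subset T ->
  sqnorm (P T *m x) = sqnorm (P S *m x) + sqnorm (P T *m (x - P S *m x)).
Proof.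
move=> ST; have TPS : span T (P S *m x) by apply: span_subset ST (proj_in_span S x).
have -> : P T *m (x - P S *m x) = P T *m x - P S *m x by rewrite mulmxBr (proj_id TPS).
rewrite -[in LHS](subrKC (P S *m x) (P T *m x)) sqnormD dotBr dot_proj // -dotBr.
by rewrite (dot_proj_res _ (proj_in_span S x)) mulr0 addr0.
Qed.

Lemma dot_sqr_le_proj T u x : span T u -> dot u x ^+ 2 <= sqnorm u * sqnorm (P T *m x).
Proof. by move=> Tu; rewrite -(dot_proj x Tu); apply: dot_sqr_le. Qed.

End Projection.

Section SigmaMin.
Variables (R : realType) (m nB : nat) (B : 'M[R]_(m, nB)).
Implicit Types (S O : {set 'I_nB}).

Lemma sigma_min_ge0 S : 0 <= sigma_min B S.
Proof.
rewrite /sigma_min; set E := (X in inf X).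
have [->|/set0P nE] := eqVneq E set0; first by rewrite inf0.
by apply: lb_le_inf nE _ => _ [x _ <-]; apply: sqnorm_ge0.
Qed.

Lemma sigma_min_gt0_card S : 0 < sigma_min B S -> (0 < #|S|)%N.
Proof.
rewrite lt0n; apply: contraTneq => S0.
rewrite /sigma_min (_ : image _ _ = set0) ?inf0 ?ltxx //.
apply/seteqP; split => // _ [x /= x1 _]; move: x1.
rewrite /sqnorm big1 => [/esym/eqP|i _]; first by rewrite oner_eq0.
by move: (ltn_ord i); rewrite {2}S0.
Qed.

Lemma sigma_min_le S (x : 'cV[R]_#|S|) :
  sigma_min B S * sqnorm x <= sqnorm (normalized_cols B S *m x).
Proof.
have [->|xn0] := eqVneq (sqnorm x) 0; first by rewrite mulr0 sqnorm_ge0.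
have x_gt0 : 0 < sqnorm x by rewrite lt_def xn0 sqnorm_ge0.
pose q := Num.sqrt (sqnorm x).
have q2 : q ^+ 2 = sqnorm x by rewrite sqr_sqrtr // ltW.
have q2V : sqnorm (q^-1 *: x) = 1 by rewrite sqnormZ exprVn q2 mulVf.
have : sigma_min B S <= sqnorm (normalized_cols B S *m (q^-1 *: x)).
  apply: ge_inf; first by exists 0 => _ [y _ <-]; apply: sqnorm_ge0.
  by exists (q^-1 *: x).
by rewrite -scalemxAr sqnormZ exprVn q2 (ler_pdivlMl _ _ x_gt0) mulrC.
Qed.

Lemma sigma_min_sum_le O (c : 'I_nB -> R) :
  sigma_min B O * \sum_(v in O) c v ^+ 2 <=
  sqnorm (\sum_(v in O) (c v / Num.sqrt (sqnorm (col v B))) *: col v B).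
Proof.
pose x : 'cV[R]_#|O| := \col_t c (enum_val t).
have -> : \sum_(v in O) c v ^+ 2 = sqnorm x.
  by rewrite (big_enum_val (fun v => c v ^+ 2)); apply: eq_bigr => t _; rewrite mxE.
have -> : \sum_(v in O) (c v / Num.sqrt (sqnorm (col v B))) *: col v B =
          normalized_cols B O *m x.
  apply/matrixP => i j; rewrite (ord1 j) !mxE summxE.
  rewrite (big_enum_val (fun v => ((c v / _) *: col v B) i 0)).
  by apply: eq_bigr => t _; rewrite !mxE; ring.
exact: sigma_min_le.
Qed.

Lemma sigma_min_sqnorm_proj_le O (r : 'cV[R]_m) :
  (forall v, v \in O -> col v B != 0) ->
  sigma_min B O * sqnorm (proj B O *m r) <=
  \sum_(v in O) dot (col v B) r ^+ 2 / sqnorm (col v B).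
Proof.
(* |Pi_O r|^2 = <Pi_O r, r> = sum_v c_v <B_v, r>; apply Cauchy-Schwarz with the weights
   c_v |B_v|, whose squared sum sigma_min bounds by |Pi_O r|^2. *)
move=> hO; set y := proj B O *m r.
have [c yE] : in_span B O y := proj_in_span B O r.
pose nv v := Num.sqrt (sqnorm (col v B)).
have nv_neq0 v : v \in O -> nv v != 0.
  by move/hO/sqnorm_gt0; rewrite -sqrtr_gt0 => /lt0r_neq0.
have yr : sqnorm y = dot y r.
  by rewrite sqnormE /y dot_proj //; apply: proj_in_span.
set a := \sum_(v in O) (c v * nv v) ^+ 2.
set D := \sum_(v in O) dot (col v B) r ^+ 2 / sqnorm (col v B).
have cs : sqnorm y ^+ 2 <= a * D.
  have -> : D = \sum_(v in O) (dot (col v B) r / nv v) ^+ 2.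
    apply: eq_bigr => v vO; rewrite expr_div_n sqr_sqrtr //; exact: sqnorm_ge0.
  rewrite yr {1}yE dot_suml.
  have -> : \sum_(v in O) dot (c v *: col v B) r =
            \sum_(v in O) (c v * nv v) * (dot (col v B) r / nv v).
    by apply: eq_bigr => v vO; rewrite dotZl; field; apply: nv_neq0.
  exact: sumr_mul_sqr_le_cond.
have sa : sigma_min B O * a <= sqnorm y.
  have -> : y = \sum_(v in O) (c v * nv v / nv v) *: col v B.
    by rewrite yE; apply: eq_bigr => v vO; rewrite mulfK // nv_neq0.
  exact: sigma_min_sum_le.
have s0 := sigma_min_ge0 O.
have D0 : 0 <= D.
  by apply: sumr_ge0 => v _; apply: divr_ge0; [exact: sqr_ge0 | exact: sqnorm_ge0].
have [->|yn0] := eqVneq (sqnorm y) 0; first by rewrite mulr0.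
have y_gt0 : 0 < sqnorm y by rewrite lt_def yn0 sqnorm_ge0.
rewrite -(ler_pM2r y_gt0).
have := ler_wpM2l s0 cs; have := ler_wpM2r D0 sa; nra.
Qed.

End SigmaMin.

Section Objective.
Variables (R : realType) (m nA nB : nat) (A : 'M[R]_(m, nA)) (B : 'M[R]_(m, nB)).
Local Notation P S := (proj B S).
Local Notation f S := (fA A B S).
Local Notation res S k := (col k A - P S *m col k A).
Implicit Types (S T O : {set 'I_nB}).

Lemma fAE S : f S = \sum_k sqnorm (P S *m col k A).
Proof.
rewrite /fA /frob2 exchange_big; apply: eq_bigr => k _.
by apply: eq_bigr => i _; rewrite !mxE; congr (_ ^+ 2); apply: eq_bigr => j _; rewrite !mxE.
Qed.

Lemma fA_ge0 S : 0 <= f S.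
Proof. by rewrite fAE; apply: sumr_ge0 => k _; apply: sqnorm_ge0. Qed.

Lemma fA_subset_le S T : S \subset T -> f S <= f T.
Proof.
move=> ST; rewrite !fAE; apply: ler_sum => k _.
by rewrite (sqnorm_proj_subset _ _ ST) lerDl sqnorm_ge0.
Qed.

Lemma fA_gain_ge S T v : S \subset T -> v \in T -> col v B != 0 ->
  \sum_k dot (col v B) (res S k) ^+ 2 / sqnorm (col v B) <= f T - f S.
Proof.
move=> ST vT v_neq0; rewrite !fAE -sumrB; apply: ler_sum => k _.
rewrite (sqnorm_proj_subset _ _ ST) addrAC subrr add0r ler_pdivrMr ?sqnorm_gt0 // mulrC.
exact/dot_sqr_le_proj/span_col.
Qed.

(* Split P_O A_k = a_k + b_k with a_k = P_O P_S A_k.  As sum |a_k|^2 <= f S, the gap is at most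
   sum <a_k + b_k, b_k> + sum <a_k, b_k>, and Cauchy-Schwarz bounds each term by
   sqrt (f O * sum |b_k|^2). *)
Lemma fA_gap_sqr_le S O : f S <= f O ->
  (f O - f S) ^+ 2 <= 4 * f O * \sum_k sqnorm (P O *m res S k).
Proof.
move=> SO.
pose a k := P O *m (P S *m col k A).
pose b k := P O *m res S k.
have fOE : f O = \sum_k sqnorm (a k + b k).
  by rewrite fAE; apply: eq_bigr => k _; rewrite /a /b -mulmxDr subrKC.
have fa_le : \sum_k sqnorm (a k) <= f S.
  by rewrite fAE; apply: ler_sum => k _; apply: sqnorm_proj_le.
set Fa := \sum_k sqnorm (a k); set E := \sum_k sqnorm (P O *m res S k).
set U := \sum_k dot (a k + b k) (b k); set V := \sum_k dot (a k) (b k).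
have gapE : f O - Fa = U + V.
  rewrite fOE -sumrB -big_split; apply: eq_bigr => k _ /=.
  by rewrite sqnormD dotDl !sqnormE; ring.
have csU : U ^+ 2 <= f O * E by rewrite fOE; exact: sum_dot_sqr_le.
have csV : V ^+ 2 <= Fa * E := sum_dot_sqr_le a b.
have E0 : 0 <= E by apply: sumr_ge0 => k _; apply: sqnorm_ge0.
have FaE : Fa * E <= f O * E by rewrite ler_wpM2r // (le_trans fa_le SO).
have gap_le : f O - f S <= U + V by rewrite -gapE lerD2l lerN2.
have gap_ge0 : 0 <= f O - f S by rewrite subr_ge0.
apply: le_trans (_ : _ <= (U + V) ^+ 2) _.
  by rewrite ler_sqr ?nnegrE // (le_trans gap_ge0 gap_le).
have UV := sqr_ge0 (U - V).
nra.
Qed.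

Lemma fA_gap_le_gain S S' O :
  (forall v, v \in O -> col v B != 0) ->
  (forall v, v \in O -> f (S :|: [set v]) <= f S') -> f S <= f O ->
  sigma_min B O * (f O - f S) ^+ 2 <= 4 * #|O|%:R * f O * (f S' - f S).
Proof.
move=> hO gain SO.
set E := \sum_k sqnorm (P O *m res S k).
set Q := \sum_(v in O) \sum_k dot (col v B) (res S k) ^+ 2 / sqnorm (col v B).
have sE : sigma_min B O * E <= Q.
  rewrite /E /Q mulr_sumr exchange_big /=; apply: ler_sum => k _.
  exact: sigma_min_sqnorm_proj_le.
have QD : Q <= #|O|%:R * (f S' - f S).
  rewrite -sum1_card natr_sum mulr_suml; apply: ler_sum => v vO; rewrite mul1r.
  have vSv : v \in S :|: [set v] by rewrite !inE eqxx orbT.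
  have := fA_gain_ge (finset.subsetUl S [set v]) vSv (hO v vO).
  by move/le_trans; apply; rewrite lerD2r gain.
apply: le_trans (ler_wpM2l (sigma_min_ge0 B O) (fA_gap_sqr_le SO)) _.
have -> : sigma_min B O * (4 * f O * E) = 4 * f O * (sigma_min B O * E) by ring.
have -> : 4 * #|O|%:R * f O * (f S' - f S) = 4 * f O * (#|O|%:R * (f S' - f S)).
  by ring.
by apply: ler_wpM2l; [rewrite mulr_ge0 ?fA_ge0 | apply: le_trans sE QD].
Qed.

End Objective.

Section GreedyRun.
Variables (nB r : nat) (g : 'I_r -> 'I_nB).

Lemma greedy_set_succ (i : 'I_r) : greedy_set g i.+1 = greedy_set g i :|: [set g i].
Proof.
apply/finset.setP => x; rewrite finset.in_setU finset.in_set1 orbC.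
apply/imsetP/predU1P.
- case=> t; rewrite inE ltnS leq_eqVlt => /predU1P [/val_inj -> | ti] ->; first by left.
  by right; apply/imsetP; exists t; rewrite ?inE.
- case=> [-> | /imsetP [t ti ->]]; first by exists i; rewrite ?inE.
  by exists t; move: ti; rewrite !inE => /ltnW.
Qed.

Lemma greedy_output_set : greedy_output g = greedy_set g r.
Proof.
apply/finset.setP => x; apply/imsetP/imsetP => [[t _ ->]|[t _ ->]]; exists t => //.
by rewrite inE ltn_ord.
Qed.

End GreedyRun.

Lemma gap_decay (R : realDomainType) (s K F : R) (f : nat -> R) (n : nat) :
  0 < s -> 0 < K ->
  (forall t, (t < n)%N -> f t <= f t.+1) ->
  (forall t, (t < n)%N -> f t <= F -> s * (F - f t) ^+ 2 <= K * (f t.+1 - f t)) ->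
  n%:R * s * (F - f n) <= K.
Proof.
move=> s_gt0 K_gt0 f_nondecr step.
suff decay t : (t <= n)%N -> t%:R * s * (F - f t) <= K by exact: decay.
elim: t => [|t IH] tn; first by rewrite !mul0r ltW.
have {}IH := IH (ltnW tn).
have [e1_le0|e1_gt0] := lerP (F - f t.+1) 0.
  apply: le_trans (ltW K_gt0).
  by rewrite mulr_ge0_le0 // mulr_ge0 ?ler0n ?ltW.
have fF : f t <= F.
  by apply: le_trans (f_nondecr t tn) _; rewrite -subr_ge0 ltW.
(* With w = s (F - f t) the step reads w^2 <= K (w - s (F - f t.+1)), so w < K, and
   (K - t w) (K - w) >= 0 gives the bound at t.+1. *)
set w := s * (F - f t); move: IH; rewrite -mulrA -/w -natr1 => IH.
have ws : w ^+ 2 <= K * (w - s * (F - f t.+1)).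
  have := ler_wpM2l (ltW s_gt0) (step t tn fF).
  by rewrite /w; congr (_ <= _); ring.
have se1 : 0 < s * (F - f t.+1) by rewrite mulr_gt0.
have wK : w < K by nra.
have prod_ge0 : 0 <= (K - t%:R * w) * (K - w) by apply: mulr_ge0; lra.
have t_ge0 : 0 <= t%:R :> R by rewrite ler0n.
have : K * ((t%:R + 1) * s * (F - f t.+1)) <= K * K by nra.
by rewrite ler_pM2l.
Qed.

Unset Implicit Arguments.

Theorem theorem1 (R : realType) (m nA nB : nat)
    (A : 'M[R]_(m, nA)) (B : 'M[R]_(m, nB))
    (hB : forall j : 'I_nB, col j B != 0)
    (k : nat) (hk : (k <= nB)%N)
    (OPT : {set 'I_nB}) (hOPTk : #|OPT| = k)
    (hOPT : forall S : {set 'I_nB}, #|S| = k -> fA A B S <= fA A B OPT)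
    (hsig : 0 < sigma_min B OPT)
    (eps : R) (heps : 0 < eps)
    (r : nat) (hr : r%:Z = Num.ceil (16 * k%:R / (eps * sigma_min B OPT)))
    (g : 'I_r -> 'I_nB) (hg : is_greedy_run A B g) :
  (1 - eps) * fA A B OPT <= fA A B (greedy_output g).
Proof.
have k_gt0 : 0 < k%:R :> R by rewrite ltr0n -hOPTk; exact: sigma_min_gt0_card hsig.
set s := sigma_min B OPT in hsig hr; set F := fA A B OPT.
have [F0|F_neq0] := eqVneq F 0; first by rewrite F0 mulr0 fA_ge0.
have F_gt0 : 0 < F by rewrite lt_def F_neq0 fA_ge0.
pose f t := fA A B (greedy_set g t).
have decay : r%:R * s * (F - f r) <= 4 * k%:R * F.
  apply: gap_decay; rewrite ?mulr_gt0 // => t tr; rewrite /f (greedy_set_succ g (Ordinal tr)).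
    exact/fA_subset_le/finset.subsetUl.
  rewrite -hOPTk => fF; apply: (fA_gap_le_gain (fun v _ => hB v) _ fF) => v _.
  exact: (hg (Ordinal tr) v).
have r_ge : 16 * k%:R <= r%:R * (eps * s).
  rewrite -ler_pdivrMr ?mulr_gt0 //; have := ceil_ge (16 * k%:R / (eps * s)).
  by rewrite -hr -pmulrn.
rewrite greedy_output_set -/(f r).
have [gap_le0|gap_gt0] := lerP (F - f r) 0; first by nra.
have h1 := ler_wpM2r (ltW gap_gt0) r_ge.
have h2 := ler_wpM2l (ltW heps) decay.
have : k%:R * (4 * (F - f r)) <= k%:R * (eps * F) by nra.
rewrite ler_pM2l //; nra.
Qed.
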